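(* Let $\mathbf{A}$ be an additive category, let $T: \mathbf{A} \times \mathbf{A} \to \mathcal{A}(\mathbf{A})$ be a bilinear functor with extension $\otimes := \widehat{T}$, and let $\mathrm{Br}_{a,b}: a\otimes b \to b\otimes a$ be a morphism natural in $a,b\in\mathbf{A}$, with extension $\widehat{\mathrm{Br}}$. Then $\widehat{\mathrm{Br}}_{A,B}$ is an isomorphism for all $A,B \in \mathcal{A}(\mathbf{A})$ if and only if $\mathrm{Br}_{a,b}$ is an isomorphism for all $a,b\in\mathbf{A}$.
   Context: The Freyd category $\mathcal{A}(\mathbf{A})$: objects are morphisms $\rho_a: r_a \to a$ of $\mathbf{A}$, written $(a \xleftarrow{\rho_a} r_a)$; morphisms $(a \xleftarrow{\rho_a} r_a) \to (b \xleftarrow{\rho_b} r_b)$ are morphisms $\alpha: a\to b$ of $\mathbf{A}$ with $\alpha\circ\rho_a = \rho_b\circ\omega$ for some $\omega$, modulo those of the form $\rho_b\circ\lambda$; it is additive with cokernels. Objects $a\in\mathbf{A}$ are regarded as $(a\leftarrow 0)$ via the embedding $\mathrm{emb}$. For a multilinear (componentwise additive) $F: \prod_i \mathbf{A}_i \to \mathbf{B}$ into an additive category with cokernels, $\widehat F(A_1,\dots,A_n) = \operatorname{cok}\big(\bigoplus_j F(a_1,\dots,r_{a_j},\dots,a_n) \to F(a_1,\dots,a_n)\big)$ defines the right exact multilinear extension with $\widehat F\circ\mathrm{emb}\cong F$; restriction along $\mathrm{emb}$ is an equivalence between right exact multilinear functors on $\prod_i\mathcal{A}(\mathbf{A}_i)$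 and multilinear functors on $\prod_i\mathbf{A}_i$. $\widehat{\mathrm{Br}}$ is the unique natural transformation $(A,B)\mapsto A\otimes B \Rightarrow (A,B)\mapsto B\otimes A$ whose restriction along $\mathrm{emb}$ is $\mathrm{Br}$. *)

From HB Require Import structures.
From mathcomp Require Import all_boot all_algebra.
Unset Printing Implicit Defensive.
Import GRing.Theory.
Local Open Scope ring_scope.

Record addcat := AddCat {
  obj : Type;
  Mor : obj -> obj -> zmodType;
  comp : forall {a b c : obj}, Mor b c -> Mor a b -> Mor a c;
  idm : forall a : obj, Mor a a;
  compA : forall a b c d (f : Mor c d) (g : Mor b c) (h : Mor a b),
      comp f (comp g h) = comp (comp f g) h;
  comp1m : forall a b (f : Mor a b), comp (idm b) f = f;
  compm1 : forall a b (f : Mor a b), comp f (idm a) = f;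
  compDl : forall a b c (f f' : Mor b c) (g : Mor a b),
      comp (f + f') g = comp f g + comp f' g;
  compDr : forall a b c (f : Mor b c) (g g' : Mor a b),
      comp f (g + g') = comp f g + comp f g';
  zobj : obj;
  zobj_id : idm zobj = 0;
  bp : obj -> obj -> obj;
  bp_inl : forall a b, Mor a (bp a b);
  bp_inr : forall a b, Mor b (bp a b);
  bp_outl : forall a b, Mor (bp a b) a;
  bp_outr : forall a b, Mor (bp a b) b;
  bp_ll : forall a b, comp (bp_outl a b) (bp_inl a b) = idm a;
  bp_rr : forall a b, comp (bp_outr a b) (bp_inr a b) = idm b;
  bp_lr : forall a b, comp (bp_outl a b) (bp_inr a b) = 0;
  bp_rl : forall a b, comp (bp_outr a b) (bp_inl a b) = 0;
  bp_id : forall a b, comp (bp_inl a b) (bp_outl a b)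
                      + comp (bp_inr a b) (bp_outr a b) = idm (bp a b)
}.

Arguments comp {C a b c} : rename.
Arguments idm {C} : rename.
Arguments zobj {C} : rename.
Arguments bp {C} : rename.
Arguments bp_outl {C a b} : rename.
Arguments bp_outr {C a b} : rename.

Section Freyd.
Variable C : addcat.

Definition copair {a b c : obj C} (f : Mor C a c) (g : Mor C b c)
  : Mor C (bp a b) c := comp f bp_outl + comp g bp_outr.

(* Objects of the Freyd category A(A): morphisms rho : r -> a, (a <- r). *)
Record fobj := FObj { fa : obj C; fr : obj C; frho : Mor C fr fa }.

(* A morphism (a <- r_a) -> (b <- r_b) of A(A) is represented by some
   alpha : a -> b with alpha o rho_a = rho_b o omega for some omega. *)
Definition is_fmor (X Y : fobj) (u : Mor C (fa X) (fa Y)) : Prop :=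
  exists w : Mor C (fr X) (fr Y), comp u (frho X) = comp (frho Y) w.

(* Equality of morphisms of A(A): representatives differ by some rho_b o lambda. *)
Definition fheq (X Y : fobj) (u v : Mor C (fa X) (fa Y)) : Prop :=
  exists l : Mor C (fa X) (fr Y), u - v = comp (frho Y) l.

Definition fiso (X Y : fobj) (u : Mor C (fa X) (fa Y)) : Prop :=
  is_fmor X Y u /\
  exists v : Mor C (fa Y) (fa X),
    [/\ is_fmor Y X v, fheq X X (comp v u) (idm _) & fheq Y Y (comp u v) (idm _)].

Definition emb (a : obj C) : fobj := FObj a zobj 0.

(* Bilinear functors T : A x A -> A(A), with morphisms given by representatives
   and functoriality / bilinearity holding in A(A). *)
Record bifun := BiFun {
  bo : obj C -> obj C -> fobj;
  bh : forall {a a' b b'}, Mor C a a' -> Mor C b b' ->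
         Mor C (fa (bo a b)) (fa (bo a' b'));
  bh_mor : forall a a' b b' (f : Mor C a a') (g : Mor C b b'),
      is_fmor (bo a b) (bo a' b') (bh f g);
  bh_id : forall a b, fheq (bo a b) (bo a b) (bh (idm a) (idm b)) (idm _);
  bh_comp : forall a a' a'' b b' b'' (f : Mor C a' a'') (f' : Mor C a a')
                   (g : Mor C b' b'') (g' : Mor C b b'),
      fheq (bo a b) (bo a'' b'') (bh (comp f f') (comp g g'))
           (comp (bh f g) (bh f' g'));
  bh_addl : forall a a' b b' (f f' : Mor C a a') (g : Mor C b b'),
      fheq (bo a b) (bo a' b') (bh (f + f') g) (bh f g + bh f' g);
  bh_addr : forall a a' b b' (f : Mor C a a') (g g' : Mor C b b'),
      fheq (bo a b) (bo a' b') (bh f (g + g')) (bh f g + bh f g')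
}.

Definition is_nat_braid (T : bifun)
  (Br : forall a b, Mor C (fa (bo T a b)) (fa (bo T b a))) : Prop :=
  (forall a b, is_fmor (bo T a b) (bo T b a) (Br a b)) /\
  (forall a a' b b' (f : Mor C a a') (g : Mor C b b'),
      fheq (bo T a b) (bo T b' a')
           (comp (bh T g f) (Br a b)) (comp (Br a' b') (bh T f g))).

(* The right exact extension  A (x) B := \hat T(A,B)
     = cok( T(r_a,b) (+) T(a,r_b) --[T(rho_a,1), T(1,rho_b)]--> T(a,b) ),
   with the standard cokernel in A(A): the cokernel of a morphism
   phi : (y <- r_y) -> (x <- r_x) is (x <- r_x (+) y) with map [rho_x, phi]. *)
Definition Tens (T : bifun) (A B : fobj) : fobj :=
  let a := fa A in let b := fa B in
  FObj (fa (bo T a b))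
        (bp (fr (bo T a b)) (bp (fa (bo T (fr A) b)) (fa (bo T a (fr B)))))
        (copair (frho (bo T a b))
                (copair (bh T (frho A) (idm b)) (bh T (idm a) (frho B)))).

(* Both cokernels are quotients of
   T(a,b) resp. T(b,a), and \hat Br_{A,B} is the morphism induced by
   Br_{a,b}; this is the unique natural transformation restricting to Br. *)
Definition Brhat (T : bifun)
  (Br : forall a b, Mor C (fa (bo T a b)) (fa (bo T b a))) (A B : fobj)
  : Mor C (fa (Tens T A B)) (fa (Tens T B A)) := Br (fa A) (fa B).

End Freyd.

Arguments fa {C} : rename.
Arguments fr {C} : rename.
Arguments frho {C} : rename.
Arguments bo {C} : rename.
Arguments bh {C} _ {a a' b b'} : rename.
Arguments copair {C a b c} : rename.
Arguments is_fmor {C} : rename.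
Arguments fheq {C} : rename.
Arguments fiso {C} : rename.
Arguments emb {C} : rename.
Arguments is_nat_braid {C} : rename.
Arguments Tens {C} : rename.
Arguments Brhat {C} : rename.

(* A morphism z -> a_Y of A is null as a morphism into Y of A(A) when it
   factors through rho_Y; morphisms, their equality and isomorphisms of A(A)
   are all expressed through this notion.  The cokernel A (x) B is T(a,b) with
   the extra relations T(rho_A,1) and T(1,rho_B).  For A = emb a, B = emb b
   these extra relations are null by bilinearity, so A (x) B and T(a,b) have
   the same null maps, which gives one direction.  Conversely, naturality of
   Br turns the relation T(rho_A,1) of A (x) B into the relation T(1,rho_A)
   of B (x) A up to null maps; for the inverse of Br_{a,b} the same transfer
   runs backwards and needs Br_{r_A,b} (resp. Br_{a,r_B}) to be invertible. *)
From Pilot Require Import Defs.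
From mathcomp Require Import all_boot all_algebra.
Import GRing.Theory.
Local Open Scope ring_scope.
Local Notation comp := Defs.comp.
Local Notation compA := Defs.compA.

Set Implicit Arguments.
Unset Strict Implicit.

Section FreydNull.
Variable C : addcat.

Lemma comp0m a b c (g : Mor C a b) : comp (0 : Mor C b c) g = 0.
Proof. by apply: (@addrI _ (comp 0 g)); rewrite -compDl !addr0. Qed.

Lemma compm0 a b c (f : Mor C b c) : comp f (0 : Mor C a b) = 0.
Proof. by apply: (@addrI _ (comp f 0)); rewrite -compDr !addr0. Qed.

Lemma compNm a b c (f : Mor C b c) (g : Mor C a b) : comp (- f) g = - comp f g.
Proof. by apply: (@addrI _ (comp f g)); rewrite -compDl !subrr comp0m. Qed.

Lemma compmN a b c (f : Mor C b c) (g : Mor C a b) : comp f (- g) = - comp f g.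
Proof. by apply: (@addrI _ (comp f g)); rewrite -compDr !subrr compm0. Qed.

Lemma compBm a b c (f f' : Mor C b c) (g : Mor C a b) :
  comp (f - f') g = comp f g - comp f' g.
Proof. by rewrite compDl compNm. Qed.

Lemma compmB a b c (f : Mor C b c) (g g' : Mor C a b) :
  comp f (g - g') = comp f g - comp f g'.
Proof. by rewrite compDr compmN. Qed.

Lemma copair_inl a b c (f : Mor C a c) (g : Mor C b c) :
  comp (copair f g) (bp_inl C a b) = f.
Proof. by rewrite /copair compDl -!compA bp_ll bp_rl compm1 compm0 addr0. Qed.

Lemma copair_inr a b c (f : Mor C a c) (g : Mor C b c) :
  comp (copair f g) (bp_inr C a b) = g.
Proof. by rewrite /copair compDl -!compA bp_lr bp_rr compm1 compm0 add0r. Qed.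

Lemma comp_copair a b c d (h : Mor C c d) (f : Mor C a c) (g : Mor C b c) :
  comp h (copair f g) = copair (comp h f) (comp h g).
Proof. by rewrite /copair compDr !compA. Qed.

(* [is_fmor X Y u] is [fnull Y (comp u (frho X))] and [fheq X Y u v] is
   [fnull Y (u - v)], both by conversion. *)
Definition fnull (Y : fobj C) {z} (h : Mor C z (fa Y)) : Prop :=
  exists w : Mor C z (fr Y), h = comp (frho Y) w.
Arguments fnull Y {z} h.

Lemma fnullD Y z (h h' : Mor C z (fa Y)) :
  fnull Y h -> fnull Y h' -> fnull Y (h + h').
Proof. by move=> [w ->] [w' ->]; exists (w + w'); rewrite compDr. Qed.

Lemma fnullN Y z (h : Mor C z (fa Y)) : fnull Y h -> fnull Y (- h).
Proof. by move=> [w ->]; exists (- w); rewrite compmN. Qed.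

Lemma fnullB Y z (h h' : Mor C z (fa Y)) :
  fnull Y h -> fnull Y h' -> fnull Y (h - h').
Proof. by move=> nh nh'; apply: fnullD => //; apply: fnullN. Qed.

Lemma fnullBl Y z (h h' : Mor C z (fa Y)) :
  fnull Y h -> fnull Y (h - h') -> fnull Y h'.
Proof. by move=> nh nhh'; rewrite -[h'](subKr h); apply: fnullB. Qed.

Lemma fnull_compr Y z z' (h : Mor C z (fa Y)) (k : Mor C z' z) :
  fnull Y h -> fnull Y (comp h k).
Proof. by move=> [w ->]; exists (comp w k); rewrite compA. Qed.

Lemma fnull_fmor X Y (u : Mor C (fa X) (fa Y)) z (h : Mor C z (fa X)) :
  is_fmor X Y u -> fnull X h -> fnull Y (comp u h).
Proof. by move=> [w uw] [w' ->]; exists (comp w w'); rewrite compA uw -compA. Qed.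

Lemma fnull_rho Y : fnull Y (frho Y).
Proof. by exists (idm _); rewrite compm1. Qed.

Lemma fnull_copair Y a b (f : Mor C a (fa Y)) (g : Mor C b (fa Y)) :
  fnull Y f -> fnull Y g -> fnull Y (copair f g).
Proof. by move=> nf ng; apply: fnullD; apply: fnull_compr. Qed.

Lemma fnull_rel_trans (Y : fobj C) r (rho : Mor C r (fa Y)) z (h : Mor C z (fa Y)) :
  fnull Y rho -> fnull (FObj _ (fa Y) r rho) h -> fnull Y h.
Proof. by move=> nrho [w ->]; apply: fnull_compr. Qed.

Lemma fnull_fiso_cancel (P Q Y : fobj C) (x : Mor C (fa P) (fa Y))
    (u : Mor C (fa Q) (fa P)) :
  fiso Q P u -> fnull Y (comp x u) -> fnull Y (comp x (frho P)) -> fnull Y x.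
Proof.
move=> [_ [v [_ _ [l vu1]]]] nxu nxrho.
have -> : x = comp (comp x u) v - comp (comp x (frho P)) l.
  by rewrite -!compA -vu1 compmB compm1 opprB addrC subrK.
by apply: fnullB; apply: fnull_compr.
Qed.

End FreydNull.

Arguments fnull {C} Y {z} h.

Section Tensor.
Variables (C : addcat) (T : bifun C).

Lemma fnull_bh0l a a' b b' (g : Mor C b b') :
  fnull (bo T a' b') (bh T (0 : Mor C a a') g).
Proof.
have := @bh_addl _ T _ _ _ _ (0 : Mor C a a') 0 g; rewrite addr0 => n00.
by have := fnullN n00; rewrite opprB addrK.
Qed.

Lemma fnull_bh0r a a' b b' (f : Mor C a a') :
  fnull (bo T a' b') (bh T f (0 : Mor C b b')).
Proof.
have := @bh_addr _ T _ _ _ _ f (0 : Mor C b b') 0; rewrite addr0 => n00.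
by have := fnullN n00; rewrite opprB addrK.
Qed.

Lemma fnull_Tens (A B : fobj C) z (h : Mor C z (fa (bo T (fa A) (fa B)))) :
  fnull (bo T (fa A) (fa B)) h -> fnull (Tens T A B) h.
Proof. by case=> w ->; exists (comp (bp_inl _ _ _) w); rewrite compA copair_inl. Qed.

Lemma fnull_Tens_rell (A B : fobj C) :
  fnull (Tens T A B) (bh T (frho A) (idm (fa B))).
Proof.
exists (comp (bp_inr _ _ _) (bp_inl _ _ _)).
by rewrite compA copair_inr copair_inl.
Qed.

Lemma fnull_Tens_relr (A B : fobj C) :
  fnull (Tens T A B) (bh T (idm (fa A)) (frho B)).
Proof.
exists (comp (bp_inr _ _ _) (bp_inr _ _ _)).
by rewrite compA copair_inr copair_inr.
Qed.

Lemma fnull_Tens_emb a b z (h : Mor C z (fa (bo T a b))) :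
  fnull (Tens T (emb a) (emb b)) h -> fnull (bo T a b) h.
Proof.
apply: fnull_rel_trans; apply: fnull_copair; first exact: fnull_rho.
by apply: fnull_copair; [exact: fnull_bh0l | exact: fnull_bh0r].
Qed.

Lemma is_fmor_Tens (A B Y : fobj C) (u : Mor C (fa (bo T (fa A) (fa B))) (fa Y)) :
  fnull Y (comp u (frho (bo T (fa A) (fa B)))) ->
  fnull Y (comp u (bh T (frho A) (idm (fa B)))) ->
  fnull Y (comp u (bh T (idm (fa A)) (frho B))) -> is_fmor (Tens T A B) Y u.
Proof.
move=> nrho nrell nrelr; rewrite /is_fmor /= !comp_copair.
by apply: fnull_copair => //; apply: fnull_copair.
Qed.

Lemma is_fmor_Tens_emb a b a' b' (u : Mor C (fa (bo T a b)) (fa (bo T a' b'))) :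
  is_fmor (Tens T (emb a) (emb b)) (Tens T (emb a') (emb b')) u ->
  is_fmor (bo T a b) (bo T a' b') u.
Proof.
move=> /(fnull_compr (bp_inl _ _ _)); rewrite -compA copair_inl.
exact: fnull_Tens_emb.
Qed.

Variable Br : forall a b : obj C, Mor C (fa (bo T a b)) (fa (bo T b a)).
Hypothesis Br_nat : forall a a' b b' (f : Mor C a a') (g : Mor C b b'),
  fheq (bo T a b) (bo T b' a') (comp (bh T g f) (Br a b)) (comp (Br a' b') (bh T f g)).

Lemma braid_null (A B : fobj C) a0 b0 (f : Mor C a0 (fa A)) (g : Mor C b0 (fa B)) :
  fnull (Tens T B A) (bh T g f) ->
  fnull (Tens T B A) (comp (Br (fa A) (fa B)) (bh T f g)).
Proof.
move=> ngf; apply: (fnullBl _ (fnull_Tens (Br_nat f g))).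
exact: fnull_compr.
Qed.

(* v (T(g,f) Br_{a0,b0}) is T(f,g) up to null maps, and Br_{a0,b0} can be
   cancelled because it is invertible. *)
Lemma braid_inv_null (A B : fobj C) a0 b0 (f : Mor C a0 (fa A)) (g : Mor C b0 (fa B))
    (v : Mor C (fa (bo T (fa B) (fa A))) (fa (bo T (fa A) (fa B)))) :
  fiso (bo T a0 b0) (bo T b0 a0) (Br a0 b0) ->
  is_fmor (bo T (fa B) (fa A)) (bo T (fa A) (fa B)) v ->
  fheq (bo T (fa A) (fa B)) (bo T (fa A) (fa B)) (comp v (Br (fa A) (fa B))) (idm _) ->
  fnull (Tens T A B) (bh T f g) -> fnull (Tens T A B) (comp v (bh T g f)).
Proof.
move=> Br0_iso v_mor vBr nfg; apply: (fnull_fiso_cancel Br0_iso).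
  have -> : comp (comp v (bh T g f)) (Br a0 b0) =
      comp v (comp (bh T g f) (Br a0 b0) - comp (Br (fa A) (fa B)) (bh T f g))
      + comp (comp v (Br (fa A) (fa B)) - idm _) (bh T f g) + bh T f g.
    by rewrite compmB compBm comp1m !compA addrA !subrK.
  apply: fnullD => //; apply: fnullD; apply: fnull_Tens.
    exact: fnull_fmor v_mor (Br_nat f g).
  exact: fnull_compr vBr.
rewrite -compA; apply: fnull_Tens; apply: fnull_fmor v_mor _.
exact: bh_mor.
Qed.

End Tensor.

Unset Implicit Arguments.
Set Strict Implicit.

Theorem lemma3p18 (C : addcat) (T : bifun C)
  (Br : forall a b : obj C, Mor C (fa (bo T a b)) (fa (bo T b a)))
  (HBr : is_nat_braid T Br) :
  (forall A B : fobj C, fiso (Tens T A B) (Tens T B A) (Brhat T Br A B)) <->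
  (forall a b : obj C, fiso (bo T a b) (bo T b a) (Br a b)).
Proof.
have [Br_mor Br_nat] := HBr.
split=> [Brhat_iso a b | Br_iso A B].
  have [_ [v [v_mor vBr Brv]]] := Brhat_iso (emb a) (emb b).
  split; first exact: Br_mor.
  by exists v; split; [exact: is_fmor_Tens_emb | exact: fnull_Tens_emb ..].
have [_ [v [v_mor vBr Brv]]] := Br_iso (fa A) (fa B).
split.
  apply: is_fmor_Tens; first exact/fnull_Tens/Br_mor.
    by apply: braid_null => //; exact: fnull_Tens_relr.
  by apply: braid_null => //; exact: fnull_Tens_rell.
exists v; split; [|exact/fnull_Tens/vBr|exact/fnull_Tens/Brv].
apply: is_fmor_Tens; first exact/fnull_Tens/v_mor.
  by apply: braid_inv_null => //; exact: fnull_Tens_relr.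
by apply: braid_inv_null => //; exact: fnull_Tens_rell.
Qed.
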